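(* Consider the linear model $Y=A\alpha+B\beta+\varepsilon$ with $\mathbb{E}(\varepsilon)=0$, $\mathrm{Var}(\varepsilon)=\sigma^2I$, and let $K$ be a matrix with as many rows as $\alpha$ has entries. Then the information matrix $C[K'\alpha]$ for $K'\alpha$ satisfies $$C[K'\alpha]\le (K'K)^+K'\,C[\alpha]\,K(K'K)^+$$ in the Loewner order, with equality if and only if $C[\alpha]$ commutes with $\mathrm{pr}_{(K)}$.
   Context: $X^+$ denotes the Moore–Penrose inverse; $\mathrm{pr}_{(X)}=X(X'X)^+X'$ is the orthogonal projection onto the column space of $X$, and $\mathrm{pr}^\perp_{(X)}=I-\mathrm{pr}_{(X)}$. For symmetric $M,N$, $M\le N$ means $N-M$ is nonnegative definite. In a model $\mathbb{E}(Y)=X_1\theta_1+X_2\theta_2$, the information matrix for $\theta_1$ is $X_1'\mathrm{pr}^\perp_{(X_2)}X_1$; thus $C[\alpha]=A'\mathrm{pr}^\perp_{(B)}A$, and $C[K'\alpha]$ is the information matrix for $\theta_1=K'\alpha$ in the reparametrization $\mathbb{E}(Y)=AK(K'K)^+\,(K'\alpha)+AM\,(M\alpha)+B\beta$ with $M=I-K(K'K)^+K'$, i.e. $C[K'\alpha]=X_1'\mathrm{pr}^\perp_{(X_2)}X_1$ with $X_1=AK(K'K)^+$ and $X_2=(AM\mid B)$. *)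

From HB Require Import structures.
From mathcomp Require Import all_boot all_order all_algebra.
From Stdlib Require Import ClassicalEpsilon.
Set Implicit Arguments. Unset Strict Implicit. Unset Printing Implicit Defensive.
Import Order.TTheory GRing.Theory Num.Theory.
Local Open Scope ring_scope.

Section Defs.
Variable R : realFieldType.

Definition penrose m n (A : 'M[R]_(m, n)) (X : 'M[R]_(n, m)) : Prop :=
  [/\ A *m X *m A = A, X *m A *m X = X,
      (A *m X)^T = A *m X & (X *m A)^T = X *m A].

(* Moore-Penrose inverse X^+ (the unique matrix satisfying the Penrose
   conditions; chosen by Hilbert's epsilon). *)
Definition mpinv m n (A : 'M[R]_(m, n)) : 'M[R]_(n, m) :=
  epsilon (inhabits 0) (fun X => penrose A X).

Definition pr m n (X : 'M[R]_(m, n)) : 'M[R]_m :=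
  X *m mpinv (X^T *m X) *m X^T.
Definition prC m n (X : 'M[R]_(m, n)) : 'M[R]_m := 1%:M - pr X.

(* Information matrix for theta_1 in E(Y) = X1 theta1 + X2 theta2. *)
Definition info m n1 n2 (X1 : 'M[R]_(m, n1)) (X2 : 'M[R]_(m, n2)) : 'M[R]_n1 :=
  X1^T *m prC X2 *m X1.

Definition C_alpha n p q (A : 'M[R]_(n, p)) (B : 'M[R]_(n, q)) : 'M[R]_p :=
  info A B.

(* C[K'alpha], via the reparametrization
   E(Y) = A K (K'K)^+ (K'alpha) + A M (M alpha) + B beta,
   M = I - K (K'K)^+ K'. *)
Definition C_Kalpha n p q s (A : 'M[R]_(n, p)) (B : 'M[R]_(n, q))
    (K : 'M[R]_(p, s)) : 'M[R]_s :=
  let M := 1%:M - K *m mpinv (K^T *m K) *m K^T in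
  info (A *m K *m mpinv (K^T *m K)) (row_mx (A *m M) B).

Definition nnd n (M : 'M[R]_n) : Prop :=
  forall x : 'cV[R]_n, 0 <= (x^T *m M *m x) 0 0.
Definition loewner_le n (M N : 'M[R]_n) : Prop := nnd (N - M).

End Defs.

From HB Require Import structures.
From mathcomp Require Import all_boot all_order all_algebra.
From Stdlib Require Import ClassicalEpsilon.
Set Implicit Arguments. Unset Strict Implicit. Unset Printing Implicit Defensive.
Import Order.TTheory GRing.Theory Num.Theory.
Local Open Scope ring_scope.

(* With V := A K (K'K)^+ and Z := (A M | B), one has C[K'alpha] = V' pr^perp_(Z) V,
   while the right-hand side is V' pr^perp_(B) V.  As the column space of B lies
   in that of Z, D := pr_(Z) - pr_(B) = pr_(Z) pr^perp_(B) is an orthogonal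
   projection, so the difference of the two sides is (DV)'(DV) >= 0, and it
   vanishes iff Z' pr^perp_(B) V = 0.  The B-block of Z' pr^perp_(B) V is zero
   and its (A M)-block is M C[alpha] K (K'K)^+, which vanishes exactly when C[alpha]
   commutes with pr_(K). *)

Section MoorePenrose.
Variable R : realFieldType.

Lemma trmx_mul_self_eq0 a b (Y : 'M[R]_(a, b)) : Y^T *m Y = 0 -> Y = 0.
Proof.
move=> YtY0; apply/matrixP => i j; rewrite mxE.
move/matrixP/(_ j j): YtY0; rewrite !mxE.
under eq_bigr do rewrite mxE -expr2.
move/psumr_eq0P => /(_ (fun k _ => sqr_ge0 _) i isT) /eqP.
by rewrite sqrf_eq0 => /eqP.
Qed.

Lemma nnd_gram a b (Y : 'M[R]_(a, b)) : nnd (Y^T *m Y).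
Proof.
move=> x; have -> : x^T *m (Y^T *m Y) *m x = (Y *m x)^T *m (Y *m x).
  by rewrite trmx_mul !mulmxA.
rewrite mxE.
by apply: sumr_ge0 => k _; rewrite mxE -expr2 sqr_ge0.
Qed.

Lemma row_free_gram_unit a b (F : 'M[R]_(a, b)) :
  row_free F -> F *m F^T \in unitmx.
Proof.
move=> freeF; rewrite -row_free_unit; apply/inj_row_free => v vFFt0.
have vF0 : v *m F = 0.
  apply/trmx_inj; rewrite trmx0; apply: trmx_mul_self_eq0.
  by rewrite trmxK trmx_mul mulmxA -(mulmxA v) vFFt0 mul0mx.
by apply: (row_free_inj freeF); rewrite vF0 mul0mx.
Qed.

(* A full-rank factorisation F G gives the explicit generalized inverse
   G' (G G')^-1 (F' F)^-1 F'. *)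
Lemma penrose_full_rank_factor m n r (F : 'M[R]_(m, r)) (G : 'M[R]_(r, n)) :
  row_free F^T -> row_free G -> exists X, penrose (F *m G) X.
Proof.
move=> /row_free_gram_unit; rewrite trmxK => uF /row_free_gram_unit uG.
set IG := invmx (G *m G^T); set IF := invmx (F^T *m F).
have symIG : IG^T = IG by rewrite trmx_inv trmx_mul trmxK.
have symIF : IF^T = IF by rewrite trmx_inv trmx_mul trmxK.
have GIG : G *m G^T *m IG = 1%:M by exact: mulmxV.
have IGG : IG *m (G *m G^T) = 1%:M by exact: mulVmx.
have IFF : IF *m (F^T *m F) = 1%:M by exact: mulVmx.
exists (G^T *m IG *m IF *m F^T).
have AX : F *m G *m (G^T *m IG *m IF *m F^T) = F *m IF *m F^T.
  by rewrite !mulmxA -(mulmxA F G) -(mulmxA F) GIG mulmx1.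
have XA : G^T *m IG *m IF *m F^T *m (F *m G) = G^T *m IG *m G.
  by rewrite !mulmxA -(mulmxA _ F^T) -(mulmxA _ IF) IFF mulmx1.
split.
- by rewrite AX !mulmxA -(mulmxA _ F^T) -(mulmxA _ IF) IFF mulmx1.
- by rewrite XA !mulmxA -(mulmxA _ G) -(mulmxA G^T IG) IGG mulmx1.
- by rewrite AX !trmx_mul trmxK symIF mulmxA.
- by rewrite XA !trmx_mul trmxK symIG mulmxA.
Qed.

Lemma mpinvP m n (A : 'M[R]_(m, n)) : penrose A (mpinv A).
Proof.
apply: epsilon_spec; rewrite -(mulmx_base A).
apply: penrose_full_rank_factor; last exact: row_base_free.
by rewrite /row_free mxrank_tr; exact: col_base_full.
Qed.

Lemma penrose_uniq m n (A : 'M[R]_(m, n)) X Y :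
  penrose A X -> penrose A Y -> X = Y.
Proof.
move=> [AXA XAX symAX symXA] [AYA YAY symAY symYA].
have X_eq : X = X *m (A *m X)^T *m (A *m Y)^T.
  by rewrite -mulmxA -trmx_mul mulmxA AYA symAX mulmxA XAX.
have Y_eq : Y = (X *m A)^T *m (Y *m A)^T *m Y.
  by rewrite -trmx_mul -(mulmxA Y) (mulmxA A) AXA symYA YAY.
rewrite Y_eq {1}X_eq symAX symAY symXA symYA.
by rewrite !mulmxA XAX -!mulmxA (mulmxA Y A Y) YAY.
Qed.

Lemma mpinv_sym k (S : 'M[R]_k) : S^T = S -> (mpinv S)^T = mpinv S.
Proof.
move=> symS; have [SXS XSX symSX symXS] := mpinvP S.
apply: (penrose_uniq (A := S)); last exact: mpinvP.
split.
- by have := congr1 trmx SXS; rewrite !trmx_mul symS mulmxA.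
- by have := congr1 trmx XSX; rewrite !trmx_mul symS mulmxA.
- by rewrite trmx_mul trmxK symS -symXS trmx_mul symS.
- by rewrite trmx_mul trmxK symS -symSX trmx_mul symS.
Qed.

End MoorePenrose.

Section Projections.
Variables (R : realFieldType) (m : nat).

Lemma mpinv_gram_sym k (X : 'M[R]_(m, k)) :
  (mpinv (X^T *m X))^T = mpinv (X^T *m X).
Proof. by apply: mpinv_sym; rewrite trmx_mul trmxK. Qed.

Lemma mul_pr_self k (X : 'M[R]_(m, k)) : pr X *m X = X.
Proof.
set S := X^T *m X; set T := mpinv S.
have [SXS _ _ symTS] := mpinvP S; rewrite -/T in SXS symTS.
have symS : S^T = S by rewrite trmx_mul trmxK.
have TSS : T *m S *m S = S.
  by rewrite -{1}symTS -{2}symS -trmx_mul mulmxA SXS symS.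
set W := X *m (T *m S) - X.
have WtX : W^T *m X = 0.
  by rewrite linearB /= trmx_mul symTS mulmxBl -mulmxA TSS subrr.
have W0 : W = 0 by apply: trmx_mul_self_eq0; rewrite mulmxBr !mulmxA WtX !mul0mx subrr.
by move/eqP: W0; rewrite subr_eq0 /pr -!mulmxA => /eqP.
Qed.

Lemma pr_sym k (X : 'M[R]_(m, k)) : (pr X)^T = pr X.
Proof. by rewrite /pr !trmx_mul trmxK mpinv_gram_sym mulmxA. Qed.

Lemma trmx_mul_pr k (X : 'M[R]_(m, k)) : X^T *m pr X = X^T.
Proof. by rewrite -pr_sym -trmx_mul mul_pr_self. Qed.

Lemma pr_idem k (X : 'M[R]_(m, k)) : pr X *m pr X = pr X.
Proof. by rewrite {2}/pr !mulmxA mul_pr_self. Qed.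

Lemma prC_sym k (X : 'M[R]_(m, k)) : (prC X)^T = prC X.
Proof. by rewrite linearB /= trmx1 pr_sym. Qed.

Lemma trmx_mul_prC k (X : 'M[R]_(m, k)) : X^T *m prC X = 0.
Proof. by rewrite mulmxBr mulmx1 trmx_mul_pr subrr. Qed.

Lemma mul_pr_row_mxr k l (X : 'M[R]_(m, k)) (Y : 'M[R]_(m, l)) :
  pr (row_mx X Y) *m Y = Y.
Proof.
by have := mul_pr_self (row_mx X Y); rewrite mul_mx_row => /eq_row_mx[].
Qed.

Section NestedProjections.
Variables (k l : nat) (Z : 'M[R]_(m, k)) (B : 'M[R]_(m, l)).
Hypothesis prZB : pr Z *m B = B.

Lemma pr_mul_pr_nested : pr Z *m pr B = pr B.
Proof. by rewrite /pr !mulmxA prZB. Qed.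

Lemma pr_nested_mul_pr : pr B *m pr Z = pr B.
Proof. by rewrite -[LHS]trmxK trmx_mul !pr_sym pr_mul_pr_nested pr_sym. Qed.

Lemma pr_sub_nested : pr Z - pr B = pr Z *m prC B.
Proof. by rewrite mulmxBr mulmx1 pr_mul_pr_nested. Qed.

End NestedProjections.
End Projections.

Section Information.
Variables (R : realFieldType) (m k : nat).

Lemma info_sym l (X1 : 'M[R]_(m, k)) (X2 : 'M[R]_(m, l)) :
  (info X1 X2)^T = info X1 X2.
Proof. by rewrite /info !trmx_mul trmxK prC_sym mulmxA. Qed.

Section NestedInformation.
Variables (l r : nat) (V : 'M[R]_(m, k)) (Z : 'M[R]_(m, l)) (B : 'M[R]_(m, r)).
Hypothesis prZB : pr Z *m B = B.

Lemma info_sub_nested :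
  info V B - info V Z = (pr Z *m prC B *m V)^T *m (pr Z *m prC B *m V).
Proof.
have D_sym : (pr Z *m prC B)^T = pr Z *m prC B.
  by rewrite -pr_sub_nested // linearB /= !pr_sym.
have D_idem : pr Z *m prC B *m (pr Z *m prC B) = pr Z *m prC B.
  rewrite -pr_sub_nested // mulmxBl !mulmxBr !pr_idem.
  by rewrite pr_mul_pr_nested // pr_nested_mul_pr // subrr subr0.
have prC_diff : prC B - prC Z = pr Z *m prC B.
  by rewrite -pr_sub_nested // /prC opprB addrC addrA subrK.
by rewrite /info -mulmxBl -mulmxBr prC_diff -{1}D_idem trmx_mul D_sym !mulmxA.
Qed.

Lemma info_le_nested : loewner_le (info V Z) (info V B).
Proof. by rewrite /loewner_le info_sub_nested; exact: nnd_gram. Qed.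

Lemma info_eq_nested : info V Z = info V B <-> Z^T *m prC B *m V = 0.
Proof.
have -> : info V Z = info V B <-> pr Z *m prC B *m V = 0.
  split=> [eqZB | DV0].
    by apply: trmx_mul_self_eq0; rewrite -info_sub_nested eqZB subrr.
  by apply/eqP; rewrite eq_sym -subr_eq0 info_sub_nested DV0 mulmx0.
split=> [DV0 | ZPV0].
  have -> : Z^T *m prC B *m V = Z^T *m (pr Z *m prC B *m V).
    by rewrite (mulmxA Z^T) (mulmxA Z^T) trmx_mul_pr.
  by rewrite DV0 mulmx0.
have -> : pr Z *m prC B *m V = Z *m mpinv (Z^T *m Z) *m (Z^T *m prC B *m V).
  by rewrite /pr !mulmxA.
by rewrite ZPV0 mulmx0.
Qed.

End NestedInformation.
End Information.

Lemma sym_idem_commute (R : comPzRingType) p (C Q : 'M[R]_p) :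
  C^T = C -> Q^T = Q -> Q *m Q = Q ->
  (1%:M - Q) *m C *m Q = 0 <-> C *m Q = Q *m C.
Proof.
move=> symC symQ idemQ; split=> [MCQ | CQ].
  have CQ : C *m Q = Q *m C *m Q.
    by apply/eqP; rewrite -subr_eq0 -mulmxBl -{1}(mul1mx C) -mulmxBl MCQ.
  have QC : Q *m C = Q *m C *m Q.
    by have := congr1 trmx CQ; rewrite !trmx_mul symQ symC mulmxA.
  by rewrite QC -CQ.
by rewrite -mulmxA CQ mulmxA mulmxBl mul1mx idemQ subrr mul0mx.
Qed.

Lemma commute_pr_iff (R : realFieldType) p s (C : 'M[R]_p) (K : 'M[R]_(p, s)) :
  C^T = C ->
  (1%:M - pr K) *m C *m (K *m mpinv (K^T *m K)) = 0 <-> C *m pr K = pr K *m C.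
Proof.
move=> symC; rewrite -sym_idem_commute ?pr_sym ?pr_idem //.
split=> [MCKT0 | MCQ]; first by rewrite {2}/pr mulmxA MCKT0 mul0mx.
have QKT : pr K *m (K *m mpinv (K^T *m K)) = K *m mpinv (K^T *m K).
  by rewrite mulmxA mul_pr_self.
by rewrite -QKT mulmxA MCQ mul0mx.
Qed.

Theorem lemma2 (R : realFieldType) (n p q s : nat)
    (A : 'M[R]_(n, p)) (B : 'M[R]_(n, q)) (K : 'M[R]_(p, s)) :
  let KtKp := mpinv (K^T *m K) in
  let rhs := KtKp *m K^T *m C_alpha A B *m K *m KtKp in
  loewner_le (C_Kalpha A B K) rhs /\
  (C_Kalpha A B K = rhs <-> C_alpha A B *m pr K = pr K *m C_alpha A B).
Proof.
move=> T rhs.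
set V := A *m K *m T; set M : 'M_p := 1%:M - pr K.
set Z := row_mx (A *m M) B.
have -> : C_Kalpha A B K = info V Z by [].
have -> : rhs = info V B.
  by rewrite /rhs /info /V !trmx_mul mpinv_gram_sym !mulmxA.
have prZB : pr Z *m B = B := mul_pr_row_mxr _ _.
split; first exact: info_le_nested.
rewrite info_eq_nested // -commute_pr_iff; last exact: info_sym.
have symM : M^T = M by rewrite linearB /= trmx1 pr_sym.
have -> : Z^T *m prC B *m V = col_mx (M *m C_alpha A B *m (K *m T)) 0.
  rewrite tr_row_mx !mul_col_mx trmx_mul_prC mul0mx.
  by rewrite trmx_mul symM /C_alpha /info /V !mulmxA.
split=> [/eqP | ->]; last exact: col_mx0.
by rewrite col_mx_eq0 eqxx andbT => /eqP.
Qed.
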